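(* For all $\alpha,\beta\in K\otimes\mathbb{C}$, $$\langle\alpha,\beta_0\rangle=\mathrm{rk}(\alpha)\deg(\beta)-\mathrm{rk}(\beta)\deg(\alpha)+\mathrm{rk}(\alpha)\mathrm{rk}(\beta)$$ and $$\langle\beta_0,\alpha\rangle=\mathrm{rk}(\beta)\deg(\alpha)-\mathrm{rk}(\alpha)\deg(\beta)+\mathrm{rk}(\alpha)\mathrm{rk}(\beta)\Big(\frac1{n-2}-1\Big).$$
   Context: Fix an integer $n\ge3$; $a_1=n-2$, $a_2=a_3=2$; $X=\mathbb{P}^1_{n-2,2,2}$ is the orbifold projective line with orbifold points of orders $n-2,2,2$. Its $K$-ring is $K=\mathbb{Z}[L_1,L_2,L_3]/\langle L_i^{a_i}-L_j^{a_j},(L_i-1)(L_j-1):i\neq j\rangle$, $L:=L_1^{n-2}$. $\mathrm{rk}:K\to\mathbb{Z}$ is the ring map $L_i\mapsto1$; $\deg:K\to\mathbb{Q}$ is additive with $\deg(1)=0$, $\deg(L_i)=1/a_i$, $\deg(EF)=\mathrm{rk}(E)\deg(F)+\mathrm{rk}(F)\deg(E)$; both extended linearly to $K\otimes\mathbb{C}$. $\langle a,b\rangle=\chi(a^\vee\otimes b)$ is the Euler pairing, extended bilinearly; equivalently $\langle a,b\rangle=\frac1{2\pi}(\Psi(a),e^{\pi\mathbf{i}\theta}e^{\pi\mathbf{i}\rho}\Psi(b))$, where $H$ has basis $\phi_{0,0}=1,\phi_{0,1}=P,\phi_{i,p}$ ($1\le i\le3$, $1\le p\le a_i-1$, twisted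 sectors), pairing $(\phi_{0,0},\phi_{0,1})=1$, $(\phi_{i,p},\phi_{i,a_i-p})=1/a_i$ and zero otherwise, $\theta(\phi_{0,0})=\frac12\phi_{0,0}$, $\theta(\phi_{0,1})=-\frac12\phi_{0,1}$, $\theta(\phi_{i,p})=(\frac12-\frac p{a_i})\phi_{i,p}$, $\rho\phi_{0,0}=\frac1{n-2}\phi_{0,1}$ and $\rho$ kills other basis vectors, and $\Psi(E)=\mathrm{rk}(E)(1-\frac{\gamma}{n-2}P)+2\pi\mathbf{i}\deg(E)P+\sum_{j,p}\Gamma(1-\frac p{a_j})\chi_{j,p}(E)\phi_{j,p}$ with $\gamma=-\Gamma'(1)+(n-2)\log Q$, $Q\in\mathbb{C}^*$, and $\chi_{j,p}$ the ring maps with $\chi_{j,p}(L_i)=e^{-2\pi\mathbf{i}p\delta_{j,i}/a_j}$. $\sigma:K\to K$ is multiplication by the tangent bundle class $T=L_1+L_2+L_3-L-1$. Put $\kappa=2(n-2)$ and for $\beta\in K\otimes\mathbb{C}$, $\beta_0=\frac1\kappa(\beta+\sigma(\beta)+\dots+\sigma^{\kappa-1}(\beta))$. *)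

From Stdlib Require Import Reals List.
From Coquelicot Require Import Coquelicot.
Import ListNotations.
Open Scope R_scope.

Definition Cexp (z : C) : C :=
  (exp (Re z) * cos (Im z), exp (Re z) * sin (Im z)).

Fixpoint Cpow (z : C) (k : nat) : C :=
  match k with O => RtoC 1 | S k' => Cmult z (Cpow z k') end.

Definition Csum {A : Type} (f : A -> C) (l : list A) : C :=
  fold_right (fun x acc => Cplus (f x) acc) (RtoC 0) l.

Definition aw (n j : nat) : nat := if Nat.eqb j 1 then (n - 2)%nat else 2%nat.

(* ---------- K (x) C ----------
   An element of K (x) C = C[L1,L2,L3]/<relations> is represented by a
   C-linear combination of monomials L1^k1 L2^k2 L3^k3 (a lift to the
   polynomial ring, which surjects onto K (x) C since the L_i are units
   of K).  All maps below are defined on lifts and are well defined on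
   the quotient. *)
Definition KC := list (C * (nat * nat * nat)).

Definition Kmul (p q : KC) : KC :=
  flat_map (fun '(c, (k1, k2, k3)) =>
    map (fun '(d, (l1, l2, l3)) =>
      (Cmult c d, ((k1 + l1)%nat, (k2 + l2)%nat, (k3 + l3)%nat))) q) p.

Definition Kscale (s : C) (p : KC) : KC :=
  map (fun '(c, m) => (Cmult s c, m)) p.

Definition Keval (z1 z2 z3 : C) (p : KC) : C :=
  Csum (fun '(c, (k1, k2, k3)) =>
    Cmult c (Cmult (Cpow z1 k1) (Cmult (Cpow z2 k2) (Cpow z3 k3)))) p.

Definition rk (p : KC) : C := Keval (RtoC 1) (RtoC 1) (RtoC 1) p.

(* deg : additive, deg 1 = 0, deg L_i = 1/a_i, Leibniz rule; hence on a
   monomial deg(L1^k1 L2^k2 L3^k3) = k1/a1 + k2/a2 + k3/a3. *)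
Definition degK (n : nat) (p : KC) : C :=
  Csum (fun '(c, (k1, k2, k3)) =>
    Cmult c (RtoC (INR k1 / INR (aw n 1) + INR k2 / INR (aw n 2)
                   + INR k3 / INR (aw n 3)))) p.

Definition zeta (n j p : nat) : C :=
  Cexp (Cmult Ci (RtoC (- 2 * PI * INR p / INR (aw n j)))).
Definition chi (n j p : nat) (x : KC) : C :=
  Keval (if Nat.eqb j 1 then zeta n j p else RtoC 1)
        (if Nat.eqb j 2 then zeta n j p else RtoC 1)
        (if Nat.eqb j 3 then zeta n j p else RtoC 1) x.

Definition Tcl (n : nat) : KC :=
  [ (RtoC 1, (1%nat, 0%nat, 0%nat)); (RtoC 1, (0%nat, 1%nat, 0%nat));
    (RtoC 1, (0%nat, 0%nat, 1%nat)); (RtoC (-1), ((n - 2)%nat, 0%nat, 0%nat));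
    (RtoC (-1), (0%nat, 0%nat, 0%nat)) ].

Definition sigma (n : nat) (b : KC) : KC := Kmul (Tcl n) b.

Definition kappa (n : nat) : nat := (2 * (n - 2))%nat.

Definition beta0 (n : nat) (b : KC) : KC :=
  Kscale (RtoC (/ INR (kappa n)))
    (flat_map (fun k => Nat.iter k (sigma n) b) (seq 0 (kappa n))).

Definition Gamma (x : R) : R :=
  RInt_gen (fun t => Rpower t (x - 1) * exp (- t))
           (at_right 0) (Rbar_locally p_infty).

(* gamma = -Gamma'(1) + (n-2) log Q, with lq a chosen logarithm of Q *)
Definition gam (n : nat) (lq : C) : C :=
  Cplus (RtoC (- Derive Gamma 1)) (Cmult (RtoC (INR (n - 2))) lq).

(* basis: phi_{0,0}=1, phi_{0,1}=P, twisted phi_{j,p}, 1<=j<=3, 1<=p<=a_j-1 *)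
Inductive Hidx := H00 | H01 | Htw (j p : nat).
Definition Hvec := Hidx -> C.

Definition twisted (n : nat) : list (nat * nat) :=
  flat_map (fun j => map (fun p => (j, p)) (seq 1 (aw n j - 1))) [1%nat; 2%nat; 3%nat].

Definition Hpair (n : nat) (u v : Hvec) : C :=
  Cplus (Cplus (Cmult (u H00) (v H01)) (Cmult (u H01) (v H00)))
    (Csum (fun '(j, p) =>
       Cmult (RtoC (/ INR (aw n j)))
             (Cmult (u (Htw j p)) (v (Htw j (aw n j - p)%nat)))) (twisted n)).

(* e^{pi i theta}: theta is diagonal in the basis *)
Definition theta_eig (n : nat) (i : Hidx) : R :=
  match i with
  | H00 => 1 / 2
  | H01 => - (1 / 2)
  | Htw j p => 1 / 2 - INR p / INR (aw n j)
  end.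
Definition exp_pi_i_theta (n : nat) (v : Hvec) : Hvec :=
  fun i => Cmult (Cexp (Cmult Ci (RtoC (PI * theta_eig n i)))) (v i).

(* e^{pi i rho} = 1 + pi i rho since rho^2 = 0;
   rho phi_{0,0} = (1/(n-2)) phi_{0,1}, rho kills the other basis vectors *)
Definition exp_pi_i_rho (n : nat) (v : Hvec) : Hvec :=
  fun i => match i with
  | H01 => Cplus (v H01) (Cmult (Cmult Ci (RtoC (PI / INR (n - 2)))) (v H00))
  | _ => v i
  end.

Definition Psi (n : nat) (lq : C) (E : KC) : Hvec :=
  fun i => match i with
  | H00 => rk E
  | H01 => Cplus (Copp (Cmult (rk E) (Cdiv (gam n lq) (RtoC (INR (n - 2))))))
                 (Cmult (Cmult (RtoC (2 * PI)) Ci) (degK n E))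
  | Htw j p => Cmult (RtoC (Gamma (1 - INR p / INR (aw n j)))) (chi n j p E)
  end.

Definition euler (n : nat) (lq : C) (a b : KC) : C :=
  Cmult (RtoC (/ (2 * PI)))
    (Hpair n (Psi n lq a) (exp_pi_i_theta n (exp_pi_i_rho n (Psi n lq b)))).

From Pilot Require Import Defs.
From Stdlib Require Import Reals List Lia Lra.
From Coquelicot Require Import Coquelicot.

(* Multiplication by T fixes rk, adds rk/(n-2) to deg, and multiplies the twisted
   character chi_{j,p} by chi_{j,p}(T) = zeta = exp(-2 pi i p/a_j), a root of unity of
   order dividing a_j, hence kappa, but different from 1.  Averaging over
   sigma^0, ..., sigma^(kappa-1) therefore kills every twisted component, keeps rk and
   shifts deg by (1 - 1/kappa) rk.  If one argument has no twisted components, only the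
   untwisted sector contributes to the Euler pairing, where the gamma-terms (hence Q)
   cancel and the pairing equals rk a deg b - rk b deg a + rk a rk b / kappa. *)

Open Scope C_scope.

Lemma Csum_app {A} (f : A -> C) l1 l2 : Csum f (l1 ++ l2) = Csum f l1 + Csum f l2.
Proof. induction l1 as [|x l1 IH]; simpl; [ring|]. rewrite IH; ring. Qed.

Lemma Csum_ext {A} (f g : A -> C) l :
  (forall x, In x l -> f x = g x) -> Csum f l = Csum g l.
Proof.
  induction l as [|x l IH]; simpl; intros Hfg; [reflexivity|].
  rewrite Hfg, IH; auto.
Qed.

Lemma Csum_zero {A} (f : A -> C) l : (forall x, In x l -> f x = 0) -> Csum f l = 0.
Proof. induction l as [|x l IH]; simpl; intros Hf; [reflexivity|]. rewrite Hf, IH; auto; ring. Qed.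

Lemma Csum_plus {A} (f g : A -> C) l : Csum (fun x => f x + g x) l = Csum f l + Csum g l.
Proof. induction l as [|x l IH]; simpl; [ring|]. rewrite IH; ring. Qed.

Lemma Csum_scal {A} c (f : A -> C) l : Csum (fun x => c * f x) l = c * Csum f l.
Proof. induction l as [|x l IH]; simpl; [ring|]. rewrite IH; ring. Qed.

Lemma Csum_const {A} c (l : list A) : Csum (fun _ => c) l = RtoC (INR (length l)) * c.
Proof.
  induction l as [|x l IH].
  - simpl; ring.
  - simpl length; simpl Csum. rewrite IH, S_INR, RtoC_plus; ring.
Qed.

Lemma Csum_seq_INR m : Csum (fun k => RtoC (INR k)) (seq 0 m) = RtoC (INR m * (INR m - 1) / 2).
Proof.
  induction m as [|m IH].
  - simpl; f_equal; field.
  - rewrite seq_S, Csum_app, IH, S_INR; simpl.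
    apply injective_projections; simpl; field.
Qed.

Lemma Csum_pow_root_of_unity w m :
  w ^ m = 1 -> w <> 1 -> Csum (fun k => w ^ k) (seq 0 m) = 0.
Proof.
  intros Hwm Hw1.
  assert (Hgeom : (w - 1) * Csum (fun k => w ^ k) (seq 0 m) = w ^ m - 1).
  { clear Hwm; induction m as [|m IH]; [simpl; ring|].
    rewrite seq_S, Csum_app, Cmult_plus_distr_l, IH; simpl; ring. }
  assert (Hw : w - 1 <> 0) by (apply Cminus_eq_contra; exact Hw1).
  replace (Csum _ _) with (/ (w - 1) * ((w - 1) * Csum (fun k => w ^ k) (seq 0 m)))
    by (field; exact Hw).
  rewrite Hgeom, Hwm; ring.
Qed.

(* Linear extension to lifts of a function on monomials L1^k1 L2^k2 L3^k3; Keval, rk,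
   degK and chi are all of this form. *)
Definition Klin (f : nat * nat * nat -> C) (p : KC) : C :=
  Csum (fun cm => fst cm * f (snd cm)) p.

Definition monomial_mul (m m' : nat * nat * nat) : nat * nat * nat :=
  let '(k1, k2, k3) := m in
  let '(l1, l2, l3) := m' in ((k1 + l1)%nat, (k2 + l2)%nat, (k3 + l3)%nat).

Lemma Klin_cons f c m p : Klin f ((c, m) :: p) = c * f m + Klin f p.
Proof. reflexivity. Qed.

Lemma Klin_app f p q : Klin f (p ++ q) = Klin f p + Klin f q.
Proof. apply Csum_app. Qed.

Lemma Klin_ext f g p : (forall m, f m = g m) -> Klin f p = Klin g p.
Proof. intros Hfg; apply Csum_ext; intros cm _; rewrite Hfg; reflexivity. Qed.

Lemma Klin_plus f g p : Klin (fun m => f m + g m) p = Klin f p + Klin g p.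
Proof.
  unfold Klin; rewrite <- Csum_plus.
  apply Csum_ext; intros cm _; ring.
Qed.

Lemma Klin_scal c f p : Klin (fun m => c * f m) p = c * Klin f p.
Proof.
  unfold Klin; rewrite <- Csum_scal.
  apply Csum_ext; intros cm _; ring.
Qed.

Lemma Klin_flat_map {A} f (g : A -> KC) l :
  Klin f (flat_map g l) = Csum (fun x => Klin f (g x)) l.
Proof. induction l as [|x l IH]; simpl; [reflexivity|]. rewrite Klin_app, IH; reflexivity. Qed.

Lemma Klin_Kscale f s p : Klin f (Kscale s p) = s * Klin f p.
Proof.
  induction p as [|[c m] p IH]; [unfold Klin; simpl; ring|].
  unfold Kscale in *; simpl map; rewrite !Klin_cons, IH; ring.
Qed.

Lemma Klin_Kmul f p q :
  Klin f (Kmul p q) = Klin (fun m => Klin (fun m' => f (monomial_mul m m')) q) p.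
Proof.
  unfold Kmul; induction p as [|[c [[k1 k2] k3]] p IH]; [reflexivity|].
  simpl flat_map; rewrite Klin_app, IH.
  assert (Hrow : Klin f (map (fun '(d, (l1, l2, l3)) =>
                   (c * d, ((k1 + l1)%nat, (k2 + l2)%nat, (k3 + l3)%nat))) q)
                 = c * Klin (fun m' => f (monomial_mul (k1, k2, k3) m')) q).
  { clear IH; induction q as [|[d [[l1 l2] l3]] q IHq]; [unfold Klin; simpl; ring|].
    simpl map; rewrite !Klin_cons, IHq; cbn [monomial_mul]; ring. }
  rewrite Hrow; reflexivity.
Qed.

Lemma Klin_Kmul_multiplicative f :
  (forall m m', f (monomial_mul m m') = f m * f m') ->
  forall p q, Klin f (Kmul p q) = Klin f p * Klin f q.
Proof.
  intros Hf p q.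
  rewrite Klin_Kmul, Cmult_comm, <- Klin_scal.
  apply Klin_ext; intros m.
  rewrite (Cmult_comm (Klin f q)), <- Klin_scal.
  apply Klin_ext, Hf.
Qed.

Lemma Klin_Kmul_derivation d f :
  (forall m m', d (monomial_mul m m') = d m * f m' + f m * d m') ->
  forall p q, Klin d (Kmul p q) = Klin d p * Klin f q + Klin f p * Klin d q.
Proof.
  intros Hd p q.
  rewrite Klin_Kmul.
  rewrite (Klin_ext _ (fun m => Klin f q * d m + Klin d q * f m)).
  - rewrite Klin_plus, !Klin_scal; ring.
  - intros m. rewrite (Klin_ext _ _ q (Hd m)), Klin_plus, !Klin_scal; ring.
Qed.

Definition eval_monomial (z1 z2 z3 : C) (m : nat * nat * nat) : C :=
  let '(k1, k2, k3) := m in z1 ^ k1 * (z2 ^ k2 * z3 ^ k3).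

Definition deg_monomial (n : nat) (m : nat * nat * nat) : C :=
  let '(k1, k2, k3) := m in
  RtoC (INR k1 / INR (aw n 1) + INR k2 / INR (aw n 2) + INR k3 / INR (aw n 3)).

Lemma Keval_Klin z1 z2 z3 p : Keval z1 z2 z3 p = Klin (eval_monomial z1 z2 z3) p.
Proof. apply Csum_ext; intros [c [[k1 k2] k3]] _; reflexivity. Qed.

Lemma rk_Klin p : rk p = Klin (fun _ => 1) p.
Proof.
  unfold rk; rewrite Keval_Klin.
  apply Klin_ext; intros [[k1 k2] k3]; simpl; rewrite !Cpow_1_l; ring.
Qed.

Lemma degK_Klin n p : degK n p = Klin (deg_monomial n) p.
Proof. apply Csum_ext; intros [c [[k1 k2] k3]] _; reflexivity. Qed.

Lemma Keval_Kmul z1 z2 z3 p q :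
  Keval z1 z2 z3 (Kmul p q) = Keval z1 z2 z3 p * Keval z1 z2 z3 q.
Proof.
  rewrite !Keval_Klin; apply Klin_Kmul_multiplicative.
  intros [[k1 k2] k3] [[l1 l2] l3]; simpl; rewrite !Cpow_add_r; ring.
Qed.

Lemma degK_Kmul n p q : degK n (Kmul p q) = degK n p * rk q + rk p * degK n q.
Proof.
  rewrite !degK_Klin, !rk_Klin; apply Klin_Kmul_derivation.
  intros [[k1 k2] k3] [[l1 l2] l3]; simpl.
  rewrite Cmult_1_r, Cmult_1_l, <- RtoC_plus, !plus_INR; f_equal.
  unfold Rdiv; ring.
Qed.

Lemma Keval_Tcl n z1 z2 z3 : Keval z1 z2 z3 (Tcl n) = z1 + z2 + z3 - z1 ^ (n - 2) - 1.
Proof. rewrite Keval_Klin; unfold Klin, Tcl; simpl; ring. Qed.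

Lemma rk_Tcl n : rk (Tcl n) = 1.
Proof. unfold rk; rewrite Keval_Tcl, Cpow_1_l; ring. Qed.

Lemma degK_Tcl n : (3 <= n)%nat -> degK n (Tcl n) = RtoC (/ INR (n - 2)).
Proof.
  intros Hn; assert (INR (n - 2) <> 0%R) by (apply not_0_INR; lia).
  unfold degK, Tcl, aw; simpl.
  apply injective_projections; simpl; field; assumption.
Qed.

Lemma Keval_iter_sigma n z1 z2 z3 k b :
  Keval z1 z2 z3 (Nat.iter k (Defs.sigma n) b) = Keval z1 z2 z3 (Tcl n) ^ k * Keval z1 z2 z3 b.
Proof.
  induction k as [|k IH]; [simpl; ring|].
  rewrite Cpow_S; simpl Nat.iter; unfold Defs.sigma at 1.
  rewrite Keval_Kmul, IH; ring.
Qed.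

Lemma rk_iter_sigma n k b : rk (Nat.iter k (Defs.sigma n) b) = rk b.
Proof. unfold rk; rewrite Keval_iter_sigma; fold (rk (Tcl n)); rewrite rk_Tcl, Cpow_1_l; ring. Qed.

Lemma degK_iter_sigma n k b : (3 <= n)%nat ->
  degK n (Nat.iter k (Defs.sigma n) b) = degK n b + RtoC (INR k * / INR (n - 2)) * rk b.
Proof.
  intros Hn; induction k as [|k IH]; simpl Nat.iter.
  - rewrite Rmult_0_l; ring.
  - unfold Defs.sigma at 1; rewrite degK_Kmul, IH, rk_Tcl, degK_Tcl, rk_iter_sigma by assumption.
    rewrite S_INR, Rmult_plus_distr_r, Rmult_1_l, RtoC_plus; ring.
Qed.

Lemma Klin_beta0 f n b :
  Klin f (beta0 n b) =
  RtoC (/ INR (kappa n)) * Csum (fun k => Klin f (Nat.iter k (Defs.sigma n) b)) (seq 0 (kappa n)).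
Proof. unfold beta0; rewrite Klin_Kscale, Klin_flat_map; reflexivity. Qed.

Lemma INR_kappa n : INR (kappa n) = (2 * INR (n - 2))%R.
Proof. unfold kappa; rewrite mult_INR; reflexivity. Qed.

Lemma rk_beta0 n b : (3 <= n)%nat -> rk (beta0 n b) = rk b.
Proof.
  intros Hn; assert (INR (kappa n) <> 0%R) by (apply not_0_INR; unfold kappa; lia).
  rewrite rk_Klin, Klin_beta0.
  rewrite (Csum_ext _ (fun _ => rk b)) by (intros k _; rewrite <- rk_Klin; apply rk_iter_sigma).
  rewrite Csum_const, length_seq, Cmult_assoc, <- RtoC_mult, Rinv_l by assumption; ring.
Qed.

Lemma degK_beta0 n b : (3 <= n)%nat ->
  degK n (beta0 n b) = degK n b + RtoC (1 - / (2 * INR (n - 2))) * rk b.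
Proof.
  intros Hn; assert (INR (n - 2) <> 0%R) by (apply not_0_INR; lia).
  rewrite degK_Klin, Klin_beta0.
  rewrite (Csum_ext _ (fun k => degK n b + rk b * RtoC (/ INR (n - 2)) * RtoC (INR k)))
    by (intros k _; rewrite <- degK_Klin, degK_iter_sigma, RtoC_mult by assumption; ring).
  rewrite Csum_plus, Csum_const, Csum_scal, Csum_seq_INR, length_seq, INR_kappa.
  apply injective_projections; simpl; field; assumption.
Qed.

Lemma Cexp_Ci_mult x : Cexp (Ci * RtoC x) = (cos x, sin x).
Proof.
  unfold Cexp; simpl.
  replace (0 * x - 1 * 0)%R with 0%R by ring.
  replace (0 * 0 + 1 * x)%R with x by ring.
  rewrite exp_0; apply injective_projections; simpl; ring.
Qed.

Lemma Cpow_cos_sin x k : (cos x, sin x) ^ k = (cos (INR k * x), sin (INR k * x)).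
Proof.
  induction k as [|k IH].
  - simpl; rewrite Rmult_0_l, cos_0, sin_0; reflexivity.
  - rewrite Cpow_S, IH, S_INR.
    replace ((INR k + 1) * x)%R with (x + INR k * x)%R by ring.
    rewrite cos_plus, sin_plus; apply injective_projections; simpl; ring.
Qed.

Lemma zeta_pow_multiple n j p m : aw n j <> 0%nat -> zeta n j p ^ (m * aw n j) = 1.
Proof.
  intros Ha; assert (INR (aw n j) <> 0%R) by (apply not_0_INR; exact Ha).
  unfold zeta; rewrite Cexp_Ci_mult, Cpow_cos_sin.
  replace (INR (m * aw n j) * (-2 * PI * INR p / INR (aw n j)))%R
    with (- (0 + 2 * INR (m * p) * PI))%R by (rewrite !mult_INR; field; assumption).
  rewrite cos_neg, sin_neg, cos_period, sin_period, cos_0, sin_0.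
  apply injective_projections; simpl; ring.
Qed.

Lemma zeta_neq_1 n j p : (0 < p < aw n j)%nat -> zeta n j p <> 1.
Proof.
  intros Hp Hz.
  assert (Ha : (0 < INR (aw n j))%R) by (apply lt_0_INR; lia).
  assert (Hp0 : (0 < INR p)%R) by (apply lt_0_INR; lia).
  assert (Hpa : (INR p < INR (aw n j))%R) by (apply lt_INR; lia).
  assert (Hq : (INR p / INR (aw n j) < 1)%R).
  { apply (Rmult_lt_reg_r (INR (aw n j))); [exact Ha|].
    unfold Rdiv; rewrite Rmult_assoc, Rinv_l by lra; lra. }
  assert (Hq0 : (0 < INR p / INR (aw n j))%R) by (apply Rdiv_lt_0_compat; assumption).
  set (t := (PI * (INR p / INR (aw n j)))%R).
  assert (Hsin : (0 < sin t)%R) by (pose proof PI_RGT_0; apply sin_gt_0; unfold t; nra).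
  unfold zeta in Hz; rewrite Cexp_Ci_mult in Hz.
  apply (f_equal fst) in Hz; simpl in Hz.
  replace (-2 * PI * INR p / INR (aw n j))%R with (- (2 * t))%R in Hz by (unfold t; field; lra).
  rewrite cos_neg, cos_2a_sin in Hz; nra.
Qed.

Lemma In_twisted n j p :
  In (j, p) (twisted n) <-> (j = 1 \/ j = 2 \/ j = 3)%nat /\ (1 <= p < aw n j)%nat.
Proof.
  unfold twisted; rewrite in_flat_map; split.
  - intros [j' [Hj' Hjp]]; apply in_map_iff in Hjp as [p' [Heq Hp']].
    injection Heq as <- <-; apply in_seq in Hp'.
    simpl in Hj'; split; lia.
  - intros [Hj Hp]; exists j; split.
    + simpl; lia.
    + apply in_map_iff; exists p; split; [reflexivity | apply in_seq; lia].
Qed.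

Lemma aw_divides_kappa n j : (j = 1 \/ j = 2 \/ j = 3)%nat -> Nat.divide (aw n j) (kappa n).
Proof.
  unfold kappa, aw; intros [-> | [-> | ->]];
    [exists 2%nat | exists (n - 2)%nat | exists (n - 2)%nat]; simpl; lia.
Qed.

Lemma chi_Tcl n j p : In (j, p) (twisted n) -> chi n j p (Tcl n) = zeta n j p.
Proof.
  intros Hjp; apply In_twisted in Hjp as [Hj Hp].
  unfold chi; rewrite Keval_Tcl.
  destruct Hj as [-> | [-> | ->]]; simpl; rewrite ?Cpow_1_l; [|ring|ring].
  rewrite <- (Nat.mul_1_l (n - 2)); change (n - 2)%nat with (aw n 1).
  rewrite zeta_pow_multiple by lia; ring.
Qed.

Lemma Keval_beta0 n z1 z2 z3 b :
  Keval z1 z2 z3 (beta0 n b) =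
  RtoC (/ INR (kappa n)) * Csum (fun k => Keval z1 z2 z3 (Tcl n) ^ k) (seq 0 (kappa n))
  * Keval z1 z2 z3 b.
Proof.
  rewrite (Keval_Klin _ _ _ (beta0 n b)), Klin_beta0.
  rewrite (Csum_ext _ (fun k => Keval z1 z2 z3 b * Keval z1 z2 z3 (Tcl n) ^ k))
    by (intros k _; rewrite <- Keval_Klin, Keval_iter_sigma; ring).
  rewrite (Csum_scal _ (fun k => Keval z1 z2 z3 (Tcl n) ^ k)); ring.
Qed.

Lemma chi_beta0 n j p b : In (j, p) (twisted n) -> chi n j p (beta0 n b) = 0.
Proof.
  intros Hjp; pose proof Hjp as Hspec; apply In_twisted in Hspec as [Hj Hp].
  unfold chi; rewrite Keval_beta0; fold (chi n j p (Tcl n)); rewrite chi_Tcl by assumption.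
  rewrite Csum_pow_root_of_unity; [ring | | apply zeta_neq_1; lia].
  destruct (aw_divides_kappa n j Hj) as [m ->]; apply zeta_pow_multiple; lia.
Qed.

Definition untwisted (n : nat) (b : KC) : Prop :=
  forall j p, In (j, p) (twisted n) -> chi n j p b = 0.

Lemma untwisted_beta0 n b : untwisted n (beta0 n b).
Proof. intros j p; apply chi_beta0. Qed.

Lemma twisted_dual n j p : In (j, p) (twisted n) -> In (j, aw n j - p)%nat (twisted n).
Proof. rewrite !In_twisted; intros [Hj Hp]; split; [assumption | lia]. Qed.

Lemma Cexp_i_pi_half : Cexp (Ci * RtoC (PI * (1 / 2))) = Ci.
Proof.
  rewrite Cexp_Ci_mult; replace (PI * (1 / 2))%R with (PI / 2)%R by field.
  rewrite cos_PI2, sin_PI2; reflexivity.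
Qed.

Lemma Cexp_minus_i_pi_half : Cexp (Ci * RtoC (PI * - (1 / 2))) = - Ci.
Proof.
  rewrite Cexp_Ci_mult; replace (PI * - (1 / 2))%R with (- (PI / 2))%R by field.
  rewrite cos_neg, sin_neg, cos_PI2, sin_PI2; apply injective_projections; simpl; ring.
Qed.

Lemma euler_untwisted n lq a b : (3 <= n)%nat -> untwisted n a \/ untwisted n b ->
  euler n lq a b =
  rk a * degK n b - rk b * degK n a + rk a * rk b * RtoC (/ (2 * INR (n - 2))).
Proof.
  intros Hn Hab; assert (INR (n - 2) <> 0%R) by (apply not_0_INR; lia).
  pose proof PI_RGT_0.
  unfold euler, Hpair.
  rewrite (Csum_zero _ (twisted n)).
  2:{ intros [j p] Hjp; unfold exp_pi_i_theta, exp_pi_i_rho, Psi.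
      destruct Hab as [Ha | Hb].
      - rewrite (Ha j p Hjp); ring.
      - rewrite (Hb j _ (twisted_dual n j p Hjp)); ring. }
  unfold exp_pi_i_theta, exp_pi_i_rho, Psi, theta_eig.
  rewrite Cexp_i_pi_half, Cexp_minus_i_pi_half.
  unfold Cdiv; apply injective_projections; simpl; field; split; lra.
Qed.

Close Scope C_scope.

Theorem lemma7 (n : nat) (hn : (3 <= n)%nat) (Q lq : C) (hQ : Q <> RtoC 0)
  (hlq : Cexp lq = Q) (alpha beta : KC) :
  euler n lq alpha (beta0 n beta) =
    Cplus (Cminus (Cmult (rk alpha) (degK n beta)) (Cmult (rk beta) (degK n alpha)))
          (Cmult (rk alpha) (rk beta))
  /\
  euler n lq (beta0 n beta) alpha =
    Cplus (Cminus (Cmult (rk beta) (degK n alpha)) (Cmult (rk alpha) (degK n beta)))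
          (Cmult (Cmult (rk alpha) (rk beta))
                 (RtoC (1 / INR (n - 2) - 1))).
Proof.
  assert (Hinv : (1 / INR (n - 2) - 1 = 2 * / (2 * INR (n - 2)) - 1)%R)
    by (field; apply not_0_INR; lia).
  rewrite Hinv.
  split; rewrite euler_untwisted by (auto using untwisted_beta0);
    rewrite rk_beta0, degK_beta0, ?RtoC_minus, ?RtoC_mult by assumption; ring.
Qed.
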